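(* Let $K>0$, $x_0<\alpha$ be real constants, and let $f$ be a continuous function on $[x_0,\alpha)$ with $f(x)>0$ on $[x_0,\alpha)$ such that either $f$ is decreasing on $[x_0,\alpha)$ or $\lim_{x\to\alpha-0}f(x)=0$. Then for every $w_0>0$ there exists a unique global positive solution $w$ on $[x_0,\alpha)$ of the initial value problem \[ w'+K=\frac{f(x)}{w},\quad x_0<x<\alpha,\qquad w(x_0)=w_0 \] (equivalently, of $(w'+K)w=f(x)$, $x_0<x<\alpha$, $w(x_0)=w_0$). *)

From Stdlib Require Import Reals.
From Coquelicot Require Export Coquelicot.
Export Reals.
Open Scope R_scope.

Definition continuous_on_Ico (g : R -> R) (a b : R) : Prop :=
  forall x, a <= x < b ->
    filterlim g (within (fun y => a <= y < b) (locally x)) (locally (g x)).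

Definition decreasing_on_Ico (g : R -> R) (a b : R) : Prop :=
  forall x y, a <= x -> x <= y -> y < b -> g y <= g x.

Definition is_global_pos_solution (K x0 alpha w0 : R) (f w : R -> R) : Prop :=
  continuous_on_Ico w x0 alpha /\
  (forall x, x0 <= x < alpha -> 0 < w x) /\
  (forall x, x0 < x < alpha -> is_derive w x (f x / w x - K)) /\
  w x0 = w0.

(* On a compact piece [x0, b] of [x0, alpha), f is bounded below by some m > 0, so a positive
   solution cannot drop below c = min (w0, m / (2 K)): wherever w <= c, w' = f / w - K > 0.
   Replacing w by max (c, w) in the right-hand side therefore gives a globally Lipschitz
   equation with the same solutions, which Picard iteration solves on [x0, b].  Two positive
   solutions u, v satisfy ((u - v)^2)' = -2 f (u - v)^2 / (u v) <= 0, so they coincide; hence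
   the solutions on the intervals [x0, b], b < alpha, agree and glue to a global solution. *)

From Stdlib Require Import Reals Lra Lia IndefiniteDescription.
From Coquelicot Require Import Coquelicot.
Open Scope R_scope.

Definition continuous_on_Icc (g : R -> R) (a b : R) : Prop :=
  forall x, a <= x <= b ->
    filterlim g (within (fun y => a <= y <= b) (locally x)) (locally (g x)).

Lemma continuous_Rabs_lt (h : R -> R) (x : R) :
  continuous h x <->
  forall eps : posreal, exists d : posreal,
    forall y, Rabs (y - x) < d -> Rabs (h y - h x) < eps.
Proof. exact (filterlim_locally h (h x)). Qed.

Lemma continuous_on_Icc_of_Rabs_lt (h : R -> R) (a b : R) :
  (forall x, a <= x <= b -> forall eps : posreal, exists d : posreal,
     forall y, a <= y <= b -> Rabs (y - x) < d -> Rabs (h y - h x) < eps) ->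
  continuous_on_Icc h a b.
Proof.
  intros H x Hx. apply filterlim_locally. intros eps.
  destruct (H x Hx eps) as [d Hd]. exists d. intros y Hxy Hy. exact (Hd y Hy Hxy).
Qed.

Lemma filter_le_within_incl {T : Type} (F : (T -> Prop) -> Prop) {FF : Filter F}
  (D E : T -> Prop) :
  (forall y, D y -> E y) -> filter_le (within D F) (within E F).
Proof.
  intros HDE P HP. unfold within in *. eapply filter_imp; [|exact HP].
  intros y HPy Dy. exact (HPy (HDE y Dy)).
Qed.

Lemma continuous_on_Icc_of_continuous (g : R -> R) (a b : R) :
  (forall x, a <= x <= b -> continuous g x) -> continuous_on_Icc g a b.
Proof.
  intros H x Hx. eapply filterlim_filter_le_1; [apply filter_le_within | exact (H x Hx)].
Qed.

Lemma continuous_on_Icc_le (g : R -> R) (a b b' : R) :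
  continuous_on_Icc g a b -> b' <= b -> continuous_on_Icc g a b'.
Proof.
  intros H Hb x Hx. eapply filterlim_filter_le_1; [|apply H; lra].
  apply (filter_le_within_incl (locally x)). intros y Hy; lra.
Qed.

Lemma continuous_on_Ico_Icc (g : R -> R) (a b c : R) :
  continuous_on_Ico g a c -> b < c -> continuous_on_Icc g a b.
Proof.
  intros H Hb x Hx. eapply filterlim_filter_le_1; [|apply H; lra].
  apply (filter_le_within_incl (locally x)). intros y Hy; lra.
Qed.

Lemma filterlim_within_Ico_of_Icc (g : R -> R) (a b c x : R) :
  continuous_on_Icc g a b -> a <= x < b ->
  filterlim g (within (fun y => a <= y < c) (locally x)) (locally (g x)).
Proof.
  intros Hg Hx P HP. specialize (Hg x ltac:(lra) P HP). unfold filtermap, within in *.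
  eapply filter_imp; [|exact (filter_and _ _ Hg (open_lt b x (proj2 Hx)))].
  intros y [Hy Hyb] Hya. apply Hy. lra.
Qed.

(* [fun t => g (clamp a b t)] extends [g] from [a, b] to a function continuous on all of R;
   [ex_RInt_continuous] and [MVT_gen] need two-sided continuity at the endpoints. *)
Definition clamp (a b t : R) : R := Rmax a (Rmin t b).

Lemma clamp_in (a b t : R) : a <= b -> a <= clamp a b t <= b.
Proof. intros. unfold clamp, Rmax, Rmin. repeat destruct Rle_dec; lra. Qed.

Lemma clamp_id (a b t : R) : a <= t <= b -> clamp a b t = t.
Proof. intros. unfold clamp, Rmax, Rmin. repeat destruct Rle_dec; lra. Qed.

Lemma clamp_lipschitz (a b s t : R) : Rabs (clamp a b s - clamp a b t) <= Rabs (s - t).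
Proof.
  unfold clamp, Rmax, Rmin. repeat destruct Rle_dec; unfold Rabs; repeat destruct Rcase_abs; lra.
Qed.

Lemma continuous_clamp (a b t : R) : continuous (clamp a b) t.
Proof.
  apply continuous_Rabs_lt. intros eps. exists eps. intros y Hy.
  eapply Rle_lt_trans; [apply clamp_lipschitz | exact Hy].
Qed.

Lemma clamp_locally_id (a b t : R) : a < t < b -> locally t (fun s => clamp a b s = s).
Proof.
  intros Ht. eapply filter_imp; [|apply (open_and _ _ (open_gt a) (open_lt b) t Ht)].
  intros s Hs. apply clamp_id. lra.
Qed.

Lemma continuous_extend_Icc (g : R -> R) (a b t : R) :
  a <= b -> continuous_on_Icc g a b -> continuous (fun s => g (clamp a b s)) t.
Proof.
  intros Hab Hg. eapply filterlim_comp; [|apply (Hg _ (clamp_in a b t Hab))].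
  intros P HP. apply (continuous_clamp a b t) in HP. unfold filtermap in *.
  eapply filter_imp; [|exact HP]. intros s Hs. exact (Hs (clamp_in a b s Hab)).
Qed.

Lemma is_derive_extend_Icc (g : R -> R) (a b t l : R) :
  a < t < b -> is_derive g t l -> is_derive (fun s => g (clamp a b s)) t l.
Proof.
  intros Ht Hd. eapply is_derive_ext_loc; [|exact Hd].
  eapply filter_imp; [|exact (clamp_locally_id a b t Ht)].
  intros s Hs. rewrite Hs. reflexivity.
Qed.

Lemma extend_Icc_pos_bounded (f : R -> R) (a b : R) :
  a <= b -> continuous_on_Icc f a b -> (forall x, a <= x <= b -> 0 < f x) ->
  exists m M, 0 < m /\ forall t, m <= f (clamp a b t) <= M.
Proof.
  intros Hab Hfc Hfpos.
  set (F := fun t => f (clamp a b t)).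
  assert (HFc : forall t, a <= t <= b -> continuity_pt F t).
  { intros t _. apply continuity_pt_filterlim, continuous_extend_Icc; assumption. }
  destruct (continuity_ab_min F a b Hab HFc) as [tmin [Hmin _]].
  destruct (continuity_ab_maj F a b Hab HFc) as [tmax [Hmax _]].
  exists (F tmin), (F tmax). split; [apply Hfpos, clamp_in, Hab|].
  intros t. pose proof (clamp_in a b t Hab).
  replace (f (clamp a b t)) with (F (clamp a b t))
    by (unfold F; rewrite (clamp_id a b (clamp a b t)) by assumption; reflexivity).
  split; [apply Hmin | apply Hmax]; assumption.
Qed.

Lemma ex_RInt_of_continuous (g : R -> R) (a b : R) :
  (forall t, continuous g t) -> ex_RInt g a b.
Proof. intros Hg. apply (@ex_RInt_continuous R_CompleteNormedModule). intros; apply Hg. Qed.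

Lemma is_derive_RInt_upper (g : R -> R) (a x : R) :
  (forall t, continuous g t) -> is_derive (fun y => RInt g a y) x (g x).
Proof.
  intros Hg. apply (is_derive_RInt g (fun y => RInt g a y) a x); [|apply Hg].
  apply filter_forall. intros y. apply (@RInt_correct R_CompleteNormedModule).
  apply ex_RInt_of_continuous, Hg.
Qed.

Lemma continuous_RInt_upper (g : R -> R) (a x : R) :
  (forall t, continuous g t) -> continuous (fun y => RInt g a y) x.
Proof.
  intros Hg. apply (@ex_derive_continuous R_AbsRing R_NormedModule).
  exists (g x). apply is_derive_RInt_upper, Hg.
Qed.

Lemma Rabs_RInt_sub_le (g1 g0 h : R -> R) (a b : R) :
  a <= b -> (forall t, continuous g1 t) -> (forall t, continuous g0 t) ->
  (forall t, continuous h t) ->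
  (forall t, a <= t <= b -> Rabs (g1 t - g0 t) <= h t) ->
  Rabs (RInt g1 a b - RInt g0 a b) <= RInt h a b.
Proof.
  intros Hab Hg1 Hg0 Hh Hle.
  assert (Hcont : forall t, continuous (fun s => g1 s - g0 s) t).
  { intros t. apply (continuous_minus g1 g0); auto. }
  replace (RInt g1 a b - RInt g0 a b) with (RInt (fun s => g1 s - g0 s) a b).
  - eapply Rle_trans; [apply abs_RInt_le; [exact Hab | apply ex_RInt_of_continuous, Hcont] |].
    apply RInt_le; [exact Hab | | apply ex_RInt_of_continuous, Hh |].
    + apply ex_RInt_of_continuous. intros t. apply continuous_Rabs_comp, Hcont.
    + intros t Ht. apply Hle. lra.
  - exact (@RInt_minus R_CompleteNormedModule g1 g0 a b
             (ex_RInt_of_continuous _ _ _ Hg1) (ex_RInt_of_continuous _ _ _ Hg0)).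
Qed.

Lemma RInt_scal_exp (k lam a t : R) :
  lam <> 0 ->
  RInt (fun s => k * exp (lam * (s - a))) a t = k / lam * (exp (lam * (t - a)) - 1).
Proof.
  intros Hlam.
  rewrite (is_RInt_unique _ a t
    (minus (k / lam * exp (lam * (t - a))) (k / lam * exp (lam * (a - a))))).
  - unfold minus, plus, opp; simpl. rewrite Rminus_diag, Rmult_0_r, exp_0. ring.
  - apply (is_RInt_derive (fun s => k / lam * exp (lam * (s - a)))).
    + intros x _. auto_derive; [exact I |]. unfold Rminus. field. exact Hlam.
    + intros x _. apply continuity_pt_filterlim. reg.
Qed.

Lemma is_lim_seq_half_pow (C : R) : is_lim_seq (fun n => C * (/2)^n) 0.
Proof.
  replace (Finite 0) with (Rbar_mult C 0) by (simpl; f_equal; ring).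
  apply is_lim_seq_scal_l, is_lim_seq_geom. rewrite Rabs_pos_eq; lra.
Qed.

Lemma Rabs_le_lim_0 (z : R) (B : nat -> R) :
  is_lim_seq B 0 -> (forall n, Rabs z <= B n) -> z = 0.
Proof.
  intros HB Hz. assert (H := is_lim_seq_le _ B _ _ Hz (is_lim_seq_const (Rabs z)) HB).
  simpl in H. destruct (Req_dec z 0) as [|Hz0]; [assumption|].
  pose proof (Rabs_pos_lt z Hz0). lra.
Qed.

Section GeometricCauchy.

Variables (u : nat -> R) (C : R).
Hypothesis u_step : forall n, Rabs (u (S n) - u n) <= C * (/2)^n.

Lemma geometric_tail_bound (n k : nat) :
  Rabs (u (n + k)%nat - u n) <= 2 * C * ((/2)^n - (/2)^(n + k)).
Proof.
  induction k as [|k IH].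
  - rewrite Nat.add_0_r. unfold Rminus. rewrite !Rplus_opp_r, Rabs_R0. lra.
  - rewrite Nat.add_succ_r.
    replace (u (S (n + k)) - u n)
      with ((u (S (n + k)) - u (n + k)%nat) + (u (n + k)%nat - u n)) by ring.
    eapply Rle_trans; [apply Rabs_triang|].
    assert (H := u_step (n + k)). simpl (_ ^ S _). lra.
Qed.

Lemma geometric_cauchy_bound (p q : nat) :
  (p <= q)%nat -> Rabs (u q - u p) <= 2 * C * (/2)^p.
Proof.
  intros Hpq. replace q with (p + (q - p))%nat by lia.
  assert (HC : 0 <= C).
  { pose proof (u_step 0) as H0. pose proof (Rabs_pos (u 1%nat - u 0%nat)). simpl in H0. lra. }
  assert (0 <= (/2)^(p + (q - p))) by (apply pow_le; lra).
  pose proof (geometric_tail_bound p (q - p)). nra.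
Qed.

Lemma Lim_seq_geometric_bound (n : nat) :
  Rabs (real (Lim_seq u) - u n) <= 2 * C * (/2)^n.
Proof.
  assert (Hex : ex_finite_lim_seq u).
  { apply ex_lim_seq_cauchy_corr. intros eps.
    destruct (proj2 (is_lim_seq_spec _ _) (is_lim_seq_half_pow (2 * C)) eps) as [N HN].
    exists N. intros p q Hp Hq.
    destruct (Nat.le_ge_cases p q) as [Hpq | Hqp].
    - rewrite Rabs_minus_sym. eapply Rle_lt_trans; [apply geometric_cauchy_bound, Hpq|].
      specialize (HN p Hp). rewrite Rminus_0_r in HN. exact (Rle_lt_trans _ _ _ (Rle_abs _) HN).
    - eapply Rle_lt_trans; [apply geometric_cauchy_bound, Hqp|].
      specialize (HN q Hq). rewrite Rminus_0_r in HN. exact (Rle_lt_trans _ _ _ (Rle_abs _) HN). }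
  destruct Hex as [l Hl]. rewrite (is_lim_seq_unique _ _ Hl). simpl.
  assert (Hlim : is_lim_seq (fun k => Rabs (u (k + n)%nat - u n)) (Rabs (l - u n))).
  { apply (is_lim_seq_abs _ (l - u n)). apply is_lim_seq_minus'.
    - apply (is_lim_seq_incr_n u n l), Hl.
    - apply is_lim_seq_const. }
  refine (is_lim_seq_le _ (fun _ => 2 * C * (/2)^n) _ _ _ Hlim (is_lim_seq_const _)).
  intros k. rewrite Nat.add_comm. apply geometric_cauchy_bound. lia.
Qed.

End GeometricCauchy.

Lemma uniform_limit_continuous_on_Icc (Y : nat -> R -> R) (y : R -> R) (B : nat -> R)
  (a b : R) :
  (forall n t, continuous (Y n) t) -> is_lim_seq B 0 ->
  (forall n t, a <= t <= b -> Rabs (y t - Y n t) <= B n) ->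
  continuous_on_Icc y a b.
Proof.
  intros HY HB Hy. apply continuous_on_Icc_of_Rabs_lt. intros x Hx eps.
  assert (He3 : 0 < eps / 3) by (destruct eps; simpl; lra).
  destruct (proj2 (is_lim_seq_spec _ _) HB (mkposreal _ He3)) as [N HN].
  specialize (HN N (le_n N)). simpl in HN. rewrite Rminus_0_r in HN.
  destruct (proj1 (continuous_Rabs_lt _ _) (HY N x) (mkposreal _ He3)) as [d Hd].
  exists d. intros z Hz Hzx.
  replace (y z - y x) with ((y z - Y N z) + (Y N z - Y N x) + - (y x - Y N x)) by ring.
  pose proof (Hy N z Hz). pose proof (Hy N x Hx). pose proof (Hd z Hzx).
  pose proof (Rle_abs (B N)). simpl in *.
  eapply Rle_lt_trans; [apply Rabs_triang|]. rewrite Rabs_Ropp.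
  pose proof (Rabs_triang (y z - Y N z) (Y N z - Y N x)). lra.
Qed.

(** * Picard iteration *)

Section Picard.

Variables (G : R -> R -> R) (L a b w0 : R).
Hypothesis L_pos : 0 < L.
Hypothesis a_le_b : a <= b.
Hypothesis G_lipschitz : forall t u v, Rabs (G t u - G t v) <= L * Rabs (u - v).
Hypothesis G_continuous : forall u t, continuous (fun s => G s u) t.

Lemma continuous_G_comp (h : R -> R) (t : R) :
  continuous h t -> continuous (fun s => G s (h s)) t.
Proof.
  intros Hh. apply continuous_Rabs_lt. intros eps.
  assert (He2 : 0 < eps / 2) by (destruct eps; simpl; lra).
  assert (HeL : 0 < eps / (2 * L)) by (destruct eps; simpl; apply Rdiv_lt_0_compat; lra).
  destruct (proj1 (continuous_Rabs_lt _ _) (G_continuous (h t) t) (mkposreal _ He2)) as [d1 Hd1].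
  destruct (proj1 (continuous_Rabs_lt _ _) Hh (mkposreal _ HeL)) as [d2 Hd2].
  exists (mkposreal _ (Rmin_pos _ _ (cond_pos d1) (cond_pos d2))). simpl. intros s Hs.
  replace (G s (h s) - G t (h t)) with ((G s (h s) - G s (h t)) + (G s (h t) - G t (h t))) by ring.
  eapply Rle_lt_trans; [apply Rabs_triang|].
  assert (H1 := Hd1 s (Rlt_le_trans _ _ _ Hs (Rmin_l _ _))).
  assert (H2 := Hd2 s (Rlt_le_trans _ _ _ Hs (Rmin_r _ _))).
  assert (H3 := G_lipschitz s (h s) (h t)). simpl in *.
  apply (Rmult_lt_compat_l L) in H2; [|exact L_pos].
  replace (L * (eps / (2 * L))) with (eps / 2) in H2 by (field; lra). lra.
Qed.

Fixpoint picard_iter (n : nat) : R -> R :=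
  match n with
  | O => fun _ => w0
  | S n => fun x => w0 + RInt (fun t => G t (picard_iter n t)) a x
  end.

Lemma picard_iter_S (n : nat) (x : R) :
  picard_iter (S n) x = w0 + RInt (fun t => G t (picard_iter n t)) a x.
Proof. reflexivity. Qed.

Lemma picard_iter_continuous (n : nat) (t : R) : continuous (picard_iter n) t.
Proof.
  revert t. induction n as [|n IH]; intros t.
  - apply continuous_const.
  - apply (continuous_plus (fun _ => w0)); [apply continuous_const|].
    apply continuous_RInt_upper. intros s. apply continuous_G_comp, IH.
Qed.

(* Measured with the weight exp (-2 L (t - a)), each Picard step contracts by 1/2; this avoids
   the factorials of the classical estimate. *)
Lemma picard_iter_step (n : nat) (D : R) :
  0 <= D ->
  (forall t, a <= t <= b ->
     Rabs (picard_iter (S n) t - picard_iter n t) <= D * exp (2 * L * (t - a))) ->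
  forall t, a <= t <= b ->
    Rabs (picard_iter (S (S n)) t - picard_iter (S n) t) <= D / 2 * exp (2 * L * (t - a)).
Proof.
  intros HD Hn t Ht.
  rewrite (picard_iter_S (S n) t), (picard_iter_S n t).
  replace (w0 + RInt (fun s => G s (picard_iter (S n) s)) a t
           - (w0 + RInt (fun s => G s (picard_iter n s)) a t))
    with (RInt (fun s => G s (picard_iter (S n) s)) a t
          - RInt (fun s => G s (picard_iter n s)) a t) by ring.
  eapply Rle_trans.
  { apply (Rabs_RInt_sub_le _ _ (fun s => L * D * exp (2 * L * (s - a)))); [lra | | | |].
    - intros s. apply continuous_G_comp, picard_iter_continuous.
    - intros s. apply continuous_G_comp, picard_iter_continuous.
    - intros s. apply continuity_pt_filterlim. reg.
    - intros s Hs. eapply Rle_trans; [apply G_lipschitz|]. rewrite Rmult_assoc.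
      apply Rmult_le_compat_l; [lra | apply Hn; lra]. }
  rewrite RInt_scal_exp by lra.
  replace (L * D / (2 * L)) with (D / 2) by (field; lra). lra.
Qed.

Lemma picard_iter_geometric :
  exists C, forall n t, a <= t <= b ->
    Rabs (picard_iter (S n) t - picard_iter n t) <= C * (/2)^n.
Proof.
  destruct (continuity_ab_maj (fun t => Rabs (picard_iter 1 t - picard_iter 0 t)) a b a_le_b)
    as [tm [Htm _]].
  { intros t _. apply continuity_pt_filterlim.
    apply (continuous_Rabs_comp (fun t => picard_iter 1 t - picard_iter 0 t)).
    apply (continuous_minus (picard_iter 1) (picard_iter 0)); apply picard_iter_continuous. }
  set (D := Rabs (picard_iter 1 tm - picard_iter 0 tm)) in Htm.
  assert (HD : 0 <= D) by apply Rabs_pos.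
  assert (Hexp : forall n t, a <= t <= b ->
    Rabs (picard_iter (S n) t - picard_iter n t) <= D * (/2)^n * exp (2 * L * (t - a))).
  { induction n as [|n IH]; intros t Ht.
    - assert (1 <= exp (2 * L * (t - a))).
      { pose proof (exp_ineq1_le (2 * L * (t - a))). nra. }
      pose proof (Htm t Ht). simpl pow. nra.
    - replace (D * (/2)^(S n)) with (D * (/2)^n / 2) by (simpl; field).
      apply picard_iter_step; [| exact IH | exact Ht].
      apply Rmult_le_pos; [exact HD | apply pow_le; lra]. }
  exists (D * exp (2 * L * (b - a))). intros n t Ht.
  eapply Rle_trans; [apply Hexp, Ht|].
  assert (exp (2 * L * (t - a)) <= exp (2 * L * (b - a))).
  { destruct (Rle_lt_or_eq_dec t b (proj2 Ht)) as [Hlt | ->]; [|lra].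
    left. apply exp_increasing. nra. }
  assert (0 <= D * (/2)^n) by (apply Rmult_le_pos; [exact HD | apply pow_le; lra]).
  replace (D * exp (2 * L * (b - a)) * (/2)^n) with (D * (/2)^n * exp (2 * L * (b - a))) by ring.
  apply Rmult_le_compat_l; assumption.
Qed.

Definition picard_limit (t : R) : R := real (Lim_seq (fun n => picard_iter n t)).

Lemma picard_limit_uniform :
  exists B, is_lim_seq B 0 /\
    forall n t, a <= t <= b -> Rabs (picard_limit t - picard_iter n t) <= B n.
Proof.
  destruct picard_iter_geometric as [C HC].
  exists (fun n => 2 * C * (/2)^n). split; [apply is_lim_seq_half_pow|].
  intros n t Ht. apply (Lim_seq_geometric_bound (fun n => picard_iter n t) C).
  intros m. apply HC, Ht.
Qed.

Lemma picard_integral_solution :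
  exists y, (forall t, continuous y t) /\
    forall x, a <= x <= b -> y x = w0 + RInt (fun t => G t (y t)) a x.
Proof.
  destruct picard_limit_uniform as [B [HB Hlim]].
  set (y := fun t => picard_limit (clamp a b t)).
  assert (Hy_eq : forall t, a <= t <= b -> y t = picard_limit t).
  { intros t Ht. unfold y. rewrite clamp_id by exact Ht. reflexivity. }
  assert (Hyc : forall t, continuous y t).
  { intros t. apply continuous_extend_Icc; [exact a_le_b|].
    apply (uniform_limit_continuous_on_Icc picard_iter _ B); auto.
    apply picard_iter_continuous. }
  exists y. split; [exact Hyc|]. intros x Hx. apply Rminus_diag_uniq.
  apply (Rabs_le_lim_0 _ (fun n => B (S n) + (b - a) * L * B n)).
  { assert (H := is_lim_seq_plus' _ _ 0 ((b - a) * L * 0)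
                   (proj1 (is_lim_seq_incr_1 B 0) HB) (is_lim_seq_scal_l B ((b - a) * L) 0 HB)).
    rewrite Rmult_0_r, Rplus_0_r in H. exact H. }
  intros n. rewrite (Hy_eq x Hx).
  replace (picard_limit x - (w0 + RInt (fun t => G t (y t)) a x))
    with ((picard_limit x - picard_iter (S n) x)
          + (RInt (fun t => G t (picard_iter n t)) a x - RInt (fun t => G t (y t)) a x))
    by (rewrite picard_iter_S; ring).
  eapply Rle_trans; [apply Rabs_triang|]. apply Rplus_le_compat; [apply Hlim, Hx|].
  eapply Rle_trans.
  { apply (Rabs_RInt_sub_le _ _ (fun _ => L * B n)); [lra | | | apply continuous_const |].
    - intros s. apply continuous_G_comp, picard_iter_continuous.
    - intros s. apply continuous_G_comp, Hyc.
    - intros t Ht. eapply Rle_trans; [apply G_lipschitz|].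
      apply Rmult_le_compat_l; [lra|].
      rewrite Rabs_minus_sym, (Hy_eq t) by lra. apply Hlim. lra. }
  rewrite RInt_const. unfold scal; simpl; unfold mult; simpl.
  assert (0 <= B n) by (eapply Rle_trans; [apply Rabs_pos | apply (Hlim n a); lra]).
  assert (0 <= L * B n) by (apply Rmult_le_pos; lra).
  rewrite Rmult_assoc. apply Rmult_le_compat_r; lra.
Qed.

End Picard.

(** * Comparison and uniqueness *)

Lemma integral_equation_is_derive (g y : R -> R) (w0 a b x : R) :
  (forall t, continuous g t) -> (forall t, a <= t <= b -> y t = w0 + RInt g a t) ->
  a < x < b -> is_derive y x (g x).
Proof.
  intros Hg Hy Hx. apply (is_derive_ext_loc (fun t => w0 + RInt g a t)).
  - eapply filter_imp; [|exact (open_and _ _ (open_gt a) (open_lt b) x Hx)].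
    intros t Ht. symmetry. apply Hy. lra.
  - assert (H := is_derive_plus (fun _ => w0) (fun t => RInt g a t) x 0 (g x)
                   (is_derive_const w0 x) (is_derive_RInt_upper g a x Hg)).
    unfold plus in H; simpl in H. rewrite Rplus_0_l in H. exact H.
Qed.

Lemma integral_equation_lower_barrier (g y : R -> R) (w0 a b c : R) :
  (forall t, continuous g t) -> (forall t, continuous y t) ->
  (forall t, a <= t <= b -> y t = w0 + RInt g a t) ->
  c <= w0 -> (forall t, a <= t <= b -> y t < c -> 0 < g t) ->
  forall t, a <= t <= b -> c <= y t.
Proof.
  intros Hg Hyc Hy Hw0 Hpos t Ht.
  destruct (Rle_lt_dec c (y t)) as [|Hlt]; [assumption|]. exfalso.
  destruct (continuity_ab_min y a t) as [tm [Hmin Htm]];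
    [lra | intros; apply continuity_pt_filterlim, Hyc |].
  assert (Hytm : y tm < c) by (specialize (Hmin t (conj (proj1 Ht) (Rle_refl t))); lra).
  assert (Ha_tm : a < tm).
  { destruct (proj1 Htm) as [|<-]; [assumption|].
    rewrite Hy, RInt_point in Hytm by lra. unfold zero in Hytm; simpl in Hytm. lra. }
  destruct (proj1 (continuous_Rabs_lt _ _) (Hg tm) (mkposreal _ (Hpos tm ltac:(lra) Hytm)))
    as [d Hd]. simpl in Hd.
  set (s := Rmax a (tm - d / 2)).
  assert (Hs : a <= s < tm /\ tm - d < s).
  { pose proof (cond_pos d). unfold s, Rmax. destruct Rle_dec; lra. }
  assert (Hint : y tm - y s = RInt g s tm).
  { rewrite (Hy tm), (Hy s) by lra.
    rewrite <- (@RInt_Chasles R_CompleteNormedModule g a s tm)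
      by (apply ex_RInt_of_continuous, Hg).
    unfold plus; simpl. ring. }
  assert (0 < RInt g s tm).
  { apply RInt_gt_0; [lra | | intros; apply Hg].
    intros z Hz. assert (Hdz : Rabs (z - tm) < d) by (unfold Rabs; destruct Rcase_abs; lra).
    specialize (Hd z Hdz). unfold Rabs in Hd. destruct Rcase_abs in Hd; lra. }
  pose proof (Hmin s ltac:(lra)). lra.
Qed.

Lemma zero_of_derive_mul_nonpos (d dd : R -> R) (a x : R) :
  a <= x -> (forall t, a <= t <= x -> continuous d t) ->
  (forall t, a < t < x -> is_derive d t (dd t)) ->
  (forall t, a <= t <= x -> d t * dd t <= 0) ->
  d a = 0 -> d x = 0.
Proof.
  intros Hax Hc Hd Hneg H0.
  destruct (MVT_gen (fun t => d t * d t) a x (fun t => 2 * (d t * dd t))) as [t [Ht Heq]];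
    rewrite Rmin_left, Rmax_right in * by exact Hax.
  - intros t Ht.
    assert (H := is_derive_mult d d t _ _ (Hd t Ht) (Hd t Ht) Rmult_comm).
    replace (2 * (d t * dd t)) with (plus (mult (dd t) (d t)) (mult (d t) (dd t)))
      by (unfold plus, mult; simpl; ring).
    exact H.
  - intros t Ht. apply continuity_pt_filterlim.
    apply (continuous_mult d d); apply Hc, Ht.
  - pose proof (Hneg t Ht). rewrite H0 in Heq. nra.
Qed.

Lemma ode_unique_dissipative (F : R -> R -> R) (u v : R -> R) (a b : R) :
  continuous_on_Icc u a b -> continuous_on_Icc v a b ->
  (forall t, a < t < b -> is_derive u t (F t (u t))) ->
  (forall t, a < t < b -> is_derive v t (F t (v t))) ->
  (forall t, a <= t <= b -> (u t - v t) * (F t (u t) - F t (v t)) <= 0) ->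
  u a = v a -> forall x, a <= x <= b -> u x = v x.
Proof.
  intros Huc Hvc Hud Hvd Hdiss H0 x Hx.
  set (d := fun t => u (clamp a b t) - v (clamp a b t)).
  assert (Hd_eq : forall t, a <= t <= b -> d t = u t - v t).
  { intros t Ht. unfold d. rewrite clamp_id by exact Ht. reflexivity. }
  apply Rminus_diag_uniq. rewrite <- Hd_eq by exact Hx.
  apply (zero_of_derive_mul_nonpos d (fun t => F t (u t) - F t (v t)) a x); [lra | | | |].
  - intros t _. apply (continuous_minus (fun t => u (clamp a b t)) (fun t => v (clamp a b t))).
    + apply continuous_extend_Icc; [lra | exact Huc].
    + apply continuous_extend_Icc; [lra | exact Hvc].
  - intros t Ht. apply (is_derive_minus (fun t => u (clamp a b t)) (fun t => v (clamp a b t))).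
    + apply is_derive_extend_Icc; [lra | apply Hud; lra].
    + apply is_derive_extend_Icc; [lra | apply Hvd; lra].
  - intros t Ht. rewrite Hd_eq by lra. apply Hdiss. lra.
  - rewrite Hd_eq by lra. rewrite H0. ring.
Qed.

(** * Positive solutions of (w' + K) w = f *)

Definition is_pos_solution_on (K a b w0 : R) (f w : R -> R) : Prop :=
  continuous_on_Icc w a b /\
  (forall x, a <= x <= b -> 0 < w x) /\
  (forall x, a < x < b -> is_derive w x (f x / w x - K)) /\
  w a = w0.

Lemma pos_solution_on_unique (K a b w0 : R) (f u v : R -> R) :
  (forall x, a <= x <= b -> 0 <= f x) ->
  is_pos_solution_on K a b w0 f u -> is_pos_solution_on K a b w0 f v ->
  forall x, a <= x <= b -> u x = v x.
Proof.
  intros Hf [Huc [Hup [Hud Hu0]]] [Hvc [Hvp [Hvd Hv0]]].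
  apply (ode_unique_dissipative (fun t w => f t / w - K)); auto; [|congruence].
  intros t Ht. pose proof (Hup t Ht). pose proof (Hvp t Ht).
  replace ((u t - v t) * (f t / u t - K - (f t / v t - K)))
    with (- (f t * ((u t - v t) * (u t - v t)) / (u t * v t))) by (field; lra).
  assert (0 <= f t * ((u t - v t) * (u t - v t)) / (u t * v t)); [|lra].
  apply Rdiv_le_0_compat.
  - apply Rmult_le_pos; [apply Hf, Ht | apply Rle_0_sqr].
  - apply Rmult_lt_0_compat; assumption.
Qed.

Lemma pos_solution_on_le (K a b b' w0 : R) (f w : R -> R) :
  is_pos_solution_on K a b w0 f w -> b' <= b -> is_pos_solution_on K a b' w0 f w.
Proof.
  intros [Hc [Hp [Hd H0]]] Hb. split; [|split; [|split]].
  - apply (continuous_on_Icc_le _ _ b); assumption.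
  - intros x Hx. apply Hp. lra.
  - intros x Hx. apply Hd. lra.
  - exact H0.
Qed.

Lemma global_pos_solution_on (K a b c w0 : R) (f w : R -> R) :
  is_global_pos_solution K a c w0 f w -> b < c -> is_pos_solution_on K a b w0 f w.
Proof.
  intros [Hc [Hp [Hd H0]]] Hb. split; [|split; [|split]].
  - apply (continuous_on_Ico_Icc _ _ _ c); assumption.
  - intros x Hx. apply Hp. lra.
  - intros x Hx. apply Hd. lra.
  - exact H0.
Qed.

Lemma global_pos_solution_unique (K x0 alpha w0 : R) (f u v : R -> R) :
  (forall x, x0 <= x < alpha -> 0 <= f x) ->
  is_global_pos_solution K x0 alpha w0 f u -> is_global_pos_solution K x0 alpha w0 f v ->
  forall x, x0 <= x < alpha -> u x = v x.
Proof.
  intros Hf Hu Hv x Hx.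
  apply (pos_solution_on_unique K x0 ((x + alpha) / 2) w0 f); [intros; apply Hf; lra | | | lra];
    eapply global_pos_solution_on; eauto; lra.
Qed.

Lemma Rmax_lipschitz (c u v : R) : Rabs (Rmax c u - Rmax c v) <= Rabs (u - v).
Proof. unfold Rmax. repeat destruct Rle_dec; unfold Rabs; repeat destruct Rcase_abs; lra. Qed.

Lemma Rdiv_Rmax_lipschitz (p M c u v : R) :
  0 < c -> 0 <= p <= M ->
  Rabs (p / Rmax c u - p / Rmax c v) <= M / (c * c) * Rabs (u - v).
Proof.
  intros Hc Hp.
  assert (HU := Rmax_l c u). assert (HV := Rmax_l c v).
  assert (Hlip := Rmax_lipschitz c u v).
  set (U := Rmax c u) in *. set (V := Rmax c v) in *.
  replace (p / U - p / V) with (p * (V - U) / (U * V)) by (field; lra).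
  rewrite Rabs_div, Rabs_mult, (Rabs_pos_eq p), (Rabs_pos_eq (U * V)), Rabs_minus_sym by nra.
  pose proof (Rabs_pos (U - V)).
  apply (Rle_trans _ (M * Rabs (U - V) / (c * c))).
  - unfold Rdiv. apply Rmult_le_compat; [nra | | nra |].
    + left. apply Rinv_0_lt_compat. nra.
    + apply Rinv_le_contravar; nra.
  - unfold Rdiv. assert (0 < / (c * c)) by (apply Rinv_0_lt_compat; nra).
    replace (M * / (c * c) * Rabs (u - v)) with (M * Rabs (u - v) * / (c * c)) by ring.
    apply Rmult_le_compat_r; [lra|]. apply Rmult_le_compat_l; lra.
Qed.

Definition truncated_rhs (K c : R) (F : R -> R) (t u : R) : R := F t / Rmax c u - K.

Lemma truncated_rhs_lipschitz (K c M : R) (F : R -> R) (t u v : R) :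
  0 < c -> (forall s, 0 <= F s <= M) ->
  Rabs (truncated_rhs K c F t u - truncated_rhs K c F t v) <= M / (c * c) * Rabs (u - v).
Proof.
  intros Hc HF. unfold truncated_rhs.
  replace (F t / Rmax c u - K - (F t / Rmax c v - K))
    with (F t / Rmax c u - F t / Rmax c v) by ring.
  apply Rdiv_Rmax_lipschitz; [exact Hc | apply HF].
Qed.

Lemma truncated_rhs_continuous (K c u t : R) (F : R -> R) :
  (forall s, continuous F s) -> continuous (fun s => truncated_rhs K c F s u) t.
Proof.
  intros HF. apply (continuous_minus (fun s => F s / Rmax c u) (fun _ => K));
    [|apply continuous_const].
  apply (continuous_mult F (fun _ => / Rmax c u)); [apply HF | apply continuous_const].
Qed.

Lemma truncated_rhs_pos (K c m t u : R) (F : R -> R) :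
  0 < c -> c * K < m -> m <= F t -> u <= c -> 0 < truncated_rhs K c F t u.
Proof.
  intros Hc HcK Hm Hu. unfold truncated_rhs. rewrite Rmax_left by exact Hu.
  replace (F t / c - K) with ((F t - c * K) / c) by (field; lra).
  apply Rdiv_lt_0_compat; lra.
Qed.

Lemma pos_solution_on_exists (K a b w0 : R) (f : R -> R) :
  0 < K -> a <= b -> continuous_on_Icc f a b -> (forall x, a <= x <= b -> 0 < f x) ->
  0 < w0 -> exists w, is_pos_solution_on K a b w0 f w.
Proof.
  intros HK Hab Hfc Hfpos Hw0.
  destruct (extend_Icc_pos_bounded f a b Hab Hfc Hfpos) as [m [M [Hm HmM]]].
  set (F := fun t => f (clamp a b t)). change (forall t, m <= F t <= M) in HmM.
  set (c := Rmin w0 (m / (2 * K))).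
  assert (Hc : 0 < c) by (apply Rmin_pos; [lra | apply Rdiv_lt_0_compat; lra]).
  assert (HcK : c * K < m).
  { assert (H := Rmin_r w0 (m / (2 * K))). fold c in H.
    apply (Rmult_le_compat_r K) in H; [|lra].
    replace (m / (2 * K) * K) with (m / 2) in H by (field; lra). lra. }
  assert (HL : 0 < M / (c * c)).
  { pose proof (HmM a). apply Rdiv_lt_0_compat; [lra | apply Rmult_lt_0_compat; lra]. }
  assert (HF_bounds : forall t, 0 <= F t <= M) by (intros t; pose proof (HmM t); lra).
  assert (HFc : forall t, continuous F t) by (intros t; apply continuous_extend_Icc; assumption).
  destruct (picard_integral_solution (truncated_rhs K c F) _ a b w0 HL Hab
              (fun t u v => truncated_rhs_lipschitz K c M F t u v Hc HF_bounds)
              (fun u t => truncated_rhs_continuous K c u t F HFc)) as [y [Hyc Hy]].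
  assert (Hgc : forall t, continuous (fun s => truncated_rhs K c F s (y s)) t).
  { intros t. apply (continuous_G_comp _ (M / (c * c)) HL); [| |apply Hyc].
    - intros s u v. apply truncated_rhs_lipschitz; assumption.
    - intros u s. apply truncated_rhs_continuous, HFc. }
  assert (Hlow : forall t, a <= t <= b -> c <= y t).
  { apply (integral_equation_lower_barrier _ y w0 a b c Hgc Hyc Hy (Rmin_l _ _)).
    intros t _ Hyt. apply (truncated_rhs_pos K c m); [exact Hc | exact HcK | apply HmM | lra]. }
  exists y. split; [|split; [|split]].
  - apply continuous_on_Icc_of_continuous. intros x _. apply Hyc.
  - intros x Hx. pose proof (Hlow x Hx). lra.
  - intros x Hx. replace (f x / y x - K) with (truncated_rhs K c F x (y x)).
    + exact (integral_equation_is_derive _ y w0 a b x Hgc Hy Hx).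
    + unfold truncated_rhs, F. rewrite Rmax_right, clamp_id by (try apply Hlow; lra).
      reflexivity.
  - rewrite Hy, RInt_point by lra. unfold zero; simpl. ring.
Qed.

Section Gluing.

Variables (K x0 alpha w0 : R) (f : R -> R) (S : R -> R -> R).
Hypothesis f_nonneg : forall x, x0 <= x < alpha -> 0 <= f x.
Hypothesis S_solution : forall b, x0 < b < alpha -> is_pos_solution_on K x0 b w0 f (S b).

Definition glued_solution (x : R) : R := S ((x + alpha) / 2) x.

Lemma glued_solution_eq (b z : R) :
  x0 < b < alpha -> x0 <= z <= b -> glued_solution z = S b z.
Proof.
  intros Hb Hz. unfold glued_solution. set (b' := (z + alpha) / 2).
  pose proof (Rmin_l b' b). pose proof (Rmin_r b' b).
  apply (pos_solution_on_unique K x0 (Rmin b' b) w0 f).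
  - intros x Hx. apply f_nonneg. lra.
  - apply (pos_solution_on_le _ _ b'); [apply S_solution; unfold b'; lra | lra].
  - apply (pos_solution_on_le _ _ b); [apply S_solution; lra | lra].
  - split; [lra|]. apply Rmin_glb; unfold b'; lra.
Qed.

Lemma glued_global_solution :
  x0 < alpha -> is_global_pos_solution K x0 alpha w0 f glued_solution.
Proof.
  intros Halpha.
  assert (Hmid : forall x, x0 <= x < alpha -> x0 < (x + alpha) / 2 < alpha /\ x < (x + alpha) / 2)
    by (intros; lra).
  split; [|split; [|split]].
  - intros x Hx. destruct (Hmid x Hx) as [Hb Hxb]. set (b := (x + alpha) / 2) in *.
    rewrite (glued_solution_eq b x) by lra.
    apply (filterlim_ext_loc (S b)).
    + unfold within. eapply filter_imp; [|exact (open_lt b x Hxb)].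
      intros z Hzb Hz. symmetry. apply glued_solution_eq; lra.
    + apply (filterlim_within_Ico_of_Icc _ x0 b); [apply (S_solution b Hb) | lra].
  - intros x Hx. destruct (Hmid x Hx) as [Hb _]. apply (S_solution _ Hb). lra.
  - intros x Hx. destruct (Hmid x ltac:(lra)) as [Hb Hxb]. set (b := (x + alpha) / 2) in *.
    rewrite (glued_solution_eq b x) by lra.
    apply (is_derive_ext_loc (S b)).
    + eapply filter_imp; [|exact (open_and _ _ (open_gt x0) (open_lt b) x ltac:(lra))].
      intros z Hz. symmetry. apply glued_solution_eq; lra.
    + apply (S_solution b Hb). lra.
  - destruct (Hmid x0 ltac:(lra)) as [Hb _]. apply (S_solution _ Hb).
Qed.

End Gluing.

Lemma global_pos_solution_exists (K x0 alpha w0 : R) (f : R -> R) :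
  0 < K -> x0 < alpha -> continuous_on_Ico f x0 alpha ->
  (forall x, x0 <= x < alpha -> 0 < f x) -> 0 < w0 ->
  exists w, is_global_pos_solution K x0 alpha w0 f w.
Proof.
  intros HK Halpha Hfc Hfpos Hw0.
  assert (Hloc : forall b, exists w, x0 < b < alpha -> is_pos_solution_on K x0 b w0 f w).
  { intros b. destruct (Rlt_dec x0 b) as [H1|H1]; [destruct (Rlt_dec b alpha) as [H2|H2]|].
    - destruct (pos_solution_on_exists K x0 b w0 f) as [w Hw]; try assumption.
      + lra.
      + apply (continuous_on_Ico_Icc _ _ _ alpha); assumption.
      + intros x Hx. apply Hfpos. lra.
      + exists w. intros _. exact Hw.
    - exists (fun _ => w0). intros Hb. lra.
    - exists (fun _ => w0). intros Hb. lra. }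
  destruct (functional_choice _ Hloc) as [S HS].
  exists (glued_solution alpha S).
  apply glued_global_solution; [intros x Hx; left; apply Hfpos, Hx | exact HS | exact Halpha].
Qed.

Theorem theorem3 (K x0 alpha : R) (f : R -> R) :
  0 < K -> x0 < alpha ->
  continuous_on_Ico f x0 alpha ->
  (forall x, x0 <= x < alpha -> 0 < f x) ->
  (decreasing_on_Ico f x0 alpha \/ filterlim f (at_left alpha) (locally 0)) ->
  forall w0 : R, 0 < w0 ->
    exists w : R -> R,
      is_global_pos_solution K x0 alpha w0 f w /\
      (forall v : R -> R, is_global_pos_solution K x0 alpha w0 f v ->
         forall x, x0 <= x < alpha -> v x = w x).
Proof.
  intros HK Halpha Hfc Hfpos _ w0 Hw0.
  destruct (global_pos_solution_exists K x0 alpha w0 f) as [w Hw]; try assumption.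
  exists w. split; [exact Hw|].
  intros v Hv. apply (global_pos_solution_unique K x0 alpha w0 f); try assumption.
  intros x Hx. left. apply Hfpos, Hx.
Qed.
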